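(* Let $E$ be a metrizable locally solid vector lattice which is an ideal in its topological completion $\widehat E$. Then $E$ has the countable sup property if and only if $\widehat E$ has the countable sup property.
   Context: A locally solid vector lattice is an (Archimedean) vector lattice with a linear topology having a base of zero neighborhoods consisting of solid sets; its topological completion $\widehat E$ is the completion of the topological vector space $E$, which is again a locally solid vector lattice containing $E$ as a dense vector sublattice. A vector lattice has the countable sup property if every nonempty subset possessing a supremum contains a countable subset with the same supremum. *)

From HB Require Import structures.
From mathcomp Require Import all_boot all_order all_algebra.
From mathcomp Require Import all_classical all_reals all_analysis.
Set Implicit Arguments. Unset Strict Implicit. Unset Printing Implicit Defensive.
Import Order.TTheory GRing.Theory Num.Theory.
Local Open Scope classical_set_scope.
Local Open Scope ring_scope.

Section VectorLattices.
Variables (R : realType) (E : topologicalLmodType R) (le : E -> E -> Prop).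

Definition is_sup (A : set E) (s : E) : Prop :=
  (forall x, A x -> le x s) /\ (forall u, (forall x, A x -> le x u) -> le s u).

Definition archimedean_vector_lattice : Prop :=
  (forall x, le x x) /\
  (forall x y, le x y -> le y x -> x = y) /\
  (forall x y z, le x y -> le y z -> le x z) /\
  (forall x y z, le x y -> le (x + z) (y + z)) /\
  (forall (a : R) x y, 0 <= a -> le x y -> le (a *: x) (a *: y)) /\
  (forall x y, exists s, is_sup [set x; y] s) /\
  (forall x y, (forall n : nat, le 0 (x *+ n) /\ le (x *+ n) y) -> x = 0).

Definition is_abs (x a : E) : Prop := is_sup [set x; - x] a.

Definition solid (A : set E) : Prop :=
  forall x y a b, A x -> is_abs x a -> is_abs y b -> le b a -> A y.

Definition locally_solid : Prop :=
  forall U : set E, nbhs (0 : E) U ->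
    exists V : set E, [/\ nbhs (0 : E) V, solid V & V `<=` U].

Definition locally_solid_vector_lattice : Prop :=
  archimedean_vector_lattice /\ locally_solid.

Definition countable_sup_property : Prop :=
  forall (A : set E) (s : E), A !=set0 -> is_sup A s ->
    exists B : set E, [/\ B `<=` A, countable B & is_sup B s].

Definition metrizable : Prop :=
  exists d : E -> E -> R,
    [/\ (forall x y, 0 <= d x y),
        (forall x y, d x y = 0 <-> x = y),
        (forall x y, d x y = d y x),
        (forall x y z, d x z <= d x y + d y z) &
        (forall (x : E) (A : set E),
            nbhs x A <-> exists2 e : R, 0 < e & [set y | d x y < e] `<=` A)].

(** Cauchy filters and completeness for the (translation invariant)
    uniformity of a topological vector space *)
Definition tvs_cauchy (G : set_system E) : Prop :=
  forall U : set E, nbhs (0 : E) U ->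
    exists2 A : set E, G A & (forall x y, A x -> A y -> U (x - y)).

Definition tvs_complete : Prop :=
  forall G : set_system E, ProperFilter G -> tvs_cauchy G -> exists l : E, G --> l.

End VectorLattices.

Section Completion.
Variables (R : realType) (E F : topologicalLmodType R)
  (leE : E -> E -> Prop) (leF : F -> F -> Prop) (j : E -> F).

(** (F, leF, j) is a topological completion of the locally solid vector
    lattice (E, leE): F is a complete Hausdorff locally solid vector lattice
    and j is an injective linear lattice homomorphism which is a topological
    embedding with dense range (so E is identified with a dense vector
    sublattice of F). *)
Definition is_lsvl_completion : Prop :=
  locally_solid_vector_lattice leF /\
  hausdorff_space F /\
  tvs_complete F /\
  (forall (a : R) x y, j (a *: x + y) = a *: j x + j y) /\
  injective j /\
  (forall x y s, is_sup leE [set x; y] s -> is_sup leF [set j x; j y] (j s)) /\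
  continuous j /\
  (forall U : set E, nbhs (0 : E) U ->
      exists2 V : set F, nbhs (0 : F) V & (forall x, V (j x) -> U x)) /\
  closure (range j) = setT.

(** the image of E is an ideal (solid linear subspace) of F *)
Definition ideal_in : Prop := solid leF (range j).

End Completion.

From HB Require Import structures.
From mathcomp Require Import all_boot all_order all_algebra.
From mathcomp Require Import all_classical all_reals all_analysis.
Set Implicit Arguments. Unset Strict Implicit. Unset Printing Implicit Defensive.
Import Order.TTheory GRing.Theory Num.Theory.
Local Open Scope classical_set_scope.
Local Open Scope ring_scope.

(* Suprema of subsets of the ideal E are the same whether computed in E or in
   F: if t = sup B in E and u bounds B in F, then m := t /\ u satisfies
   0 <= t - m <= |t - b|, so m lies in E and bounds B there, forcing t <= m.
   This gives the easy direction. Conversely let s = sup A in F; after the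
   translation a |-> (a \/ a0) - a0 we may assume A >= 0. As E is metrizable
   and dense, some sequence (e_n) in E has s - e_n in every zero neighbourhood
   for some n; solidity of the zero neighbourhoods and Hausdorffness then make
   s the supremum of f_n := |e_n| /\ s, which lie in E since E is an ideal.
   By infinite distributivity {a /\ f_n : a in A} is a subset of E with
   supremum f_n, so the countable sup property of E yields countably many a in
   A doing the same job; their union over n is a countable subset of A with
   supremum s. *)

Lemma countable_image_sub T U (g : T -> U) (A : set T) (C : set U) :
  C `<=` g @` A -> countable C ->
  exists D : set T, [/\ D `<=` A, countable D & g @` D = C].
Proof.
move=> CA cC; have [[c0 /CA[a0 Aa0 _]]|C0] := pselect (C !=set0); last first.
  have -> : C = set0 by apply/seteqP; split=> // c Cc; apply: C0; exists c.
  by exists set0; rewrite image_set0; split=> //; exact: countable0.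
have /choice[h hh] : forall c, exists a, C c -> A a /\ g a = c.
  move=> c; have [/CA[a Aa <-]|nCc] := pselect (C c); first by exists a.
  by exists a0.
exists (h @` C); split.
- by move=> _ [c Cc <-]; exact: (hh c Cc).1.
- exact: sub_countable (card_image_le _ _) cC.
- apply/seteqP; split=> [_ [_ [c Cc <-] <-]|c Cc]; first by rewrite (hh c Cc).2.
  by exists (h c); [exists c | exact: (hh c Cc).2].
Qed.

Lemma countableU1 T (a : T) (B : set T) : countable B -> countable (a |` B).
Proof.
move=> cB; have -> : a |` B = \bigcup_(i in [set: bool]) (if i then [set a] else B).
  apply/seteqP; split=> [x [->|Bx]|x [[] _ /= ?]];
    [by exists true | by exists false | by left | by right].
by apply: bigcup_countable => // -[] _; [exact: countable1 | exact: cB].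
Qed.

Section VectorLattice.
Variables (R : realType) (V : topologicalLmodType R) (le : V -> V -> Prop).
Hypothesis HV : archimedean_vector_lattice le.

Lemma vl_refl x : le x x.
Proof. by case: HV. Qed.

Lemma vl_anti x y : le x y -> le y x -> x = y.
Proof. by case: HV => _ [+ _]; apply. Qed.

Lemma vl_trans x y z : le x y -> le y z -> le x z.
Proof. by case: HV => _ [_ [+ _]]; apply. Qed.

Lemma vl_addr z x y : le x y -> le (x + z) (y + z).
Proof. by case: HV => _ [_ [_ [+ _]]]; apply. Qed.

Lemma vl_scale (a : R) x y : 0 <= a -> le x y -> le (a *: x) (a *: y).
Proof. by case: HV => _ [_ [_ [_ [+ _]]]]; apply. Qed.

Lemma vl_sup2 x y : exists s, is_sup le [set x; y] s.
Proof. by case: HV => _ [_ [_ [_ [_ [+ _]]]]]; apply. Qed.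

Lemma vl_add2r z x y : le (x + z) (y + z) <-> le x y.
Proof. by split=> [/(vl_addr (- z))|/(vl_addr z)//]; rewrite !addrK. Qed.

Lemma vl_add2l z x y : le (z + x) (z + y) <-> le x y.
Proof. by rewrite ![z + _]addrC vl_add2r. Qed.

Lemma vl_add x y x' y' : le x y -> le x' y' -> le (x + x') (y + y').
Proof. by move=> /(vl_add2r x') h /(vl_add2l y) h'; apply: vl_trans h h'. Qed.

Lemma vl_opp2 x y : le (- x) (- y) <-> le y x.
Proof. by rewrite -(vl_add2r (x + y)) addKr addrCA addNr addr0. Qed.

Lemma vl_subr_ge0 x y : le 0 (y - x) <-> le x y.
Proof. by rewrite -(vl_add2r x) add0r subrK. Qed.

Lemma vl_sub_swap x y z : le (x - y) z <-> le (x - z) y.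
Proof.
by rewrite -(vl_add2r y) subrK -(vl_add2r (- z)) [z + y]addrC addrK.
Qed.

Lemma is_sup_unique A s s' : is_sup le A s -> is_sup le A s' -> s = s'.
Proof. by move=> [As Als] [As' Als']; apply: vl_anti; [apply: Als | apply: Als']. Qed.

Lemma is_sup2_le x y : le x y -> is_sup le [set x; y] y.
Proof. by move=> xy; split=> [_ [->|->]//|u]; [exact: vl_refl | apply; right]. Qed.

Lemma is_sup2_leP x y : is_sup le [set x; y] y -> le x y.
Proof. by case=> + _; apply; left. Qed.

Definition vjoin x y : V := xget 0 [set s | is_sup le [set x; y] s].

Lemma vjoinP x y : is_sup le [set x; y] (vjoin x y).
Proof. exact: (xgetPex 0 (vl_sup2 x y)). Qed.

Lemma vjoin_l x y : le x (vjoin x y).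
Proof. by case: (vjoinP x y) => + _; apply; left. Qed.

Lemma vjoin_r x y : le y (vjoin x y).
Proof. by case: (vjoinP x y) => + _; apply; right. Qed.

Lemma vjoin_lub x y u : le x u -> le y u -> le (vjoin x y) u.
Proof. by case: (vjoinP x y) => _ + xu yu; apply=> _ [->|->]. Qed.

Lemma vjoinC x y : vjoin x y = vjoin y x.
Proof. by apply: vl_anti; apply: vjoin_lub; (apply: vjoin_l || apply: vjoin_r). Qed.

Lemma vjoinDr z x y : vjoin (x + z) (y + z) = vjoin x y + z.
Proof.
apply: vl_anti; first by apply: vjoin_lub; apply/vl_add2r;
  (apply: vjoin_l || apply: vjoin_r).
rewrite -(vl_add2r (- z)) addrK.
by apply: vjoin_lub; rewrite -(vl_add2r z) subrK; (apply: vjoin_l || apply: vjoin_r).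
Qed.

Definition vmeet x y := - vjoin (- x) (- y).

Lemma vmeet_l x y : le (vmeet x y) x.
Proof. by rewrite -[x in le _ x]opprK vl_opp2; apply: vjoin_l. Qed.

Lemma vmeet_r x y : le (vmeet x y) y.
Proof. by rewrite -[y in le _ y]opprK vl_opp2; apply: vjoin_r. Qed.

Lemma vmeet_glb x y u : le u x -> le u y -> le u (vmeet x y).
Proof.
by move=> ux uy; rewrite -[u]opprK vl_opp2; apply: vjoin_lub; rewrite vl_opp2.
Qed.

Lemma vmeet_idr x y : le y x -> vmeet x y = y.
Proof.
by move=> yx; apply: vl_anti; [exact: vmeet_r | apply: vmeet_glb => //; exact: vl_refl].
Qed.

Lemma vmeetE x y : vmeet x y = x + y - vjoin x y.
Proof.
have: vjoin (- x) (- y) + (x + y) = vjoin x y.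
  by rewrite -vjoinDr addKr addrCA addNr addr0 vjoinC.
by rewrite /vmeet => <-; rewrite [_ + (x + y)]addrC opprD addrA subrr add0r.
Qed.

Definition vabs x := vjoin x (- x).

Lemma vabsP x : is_abs le x (vabs x).
Proof. exact: vjoinP. Qed.

Lemma vabs_ge x : le x (vabs x).
Proof. exact: vjoin_l. Qed.

Lemma vabs_geN x : le (- x) (vabs x).
Proof. exact: vjoin_r. Qed.

Lemma vabs_ge0 x : le 0 (vabs x).
Proof.
have := vl_add (vabs_ge x) (vabs_geN x); rewrite subrr -mulr2n -scaler_nat.
have h2 : (0 : R) <= 2^-1 by rewrite invr_ge0 ler0n.
by move=> /(vl_scale h2); rewrite scaler0 scalerA mulVf ?pnatr_eq0 // scale1r.
Qed.

Lemma is_abs_ge0 x : le 0 x -> is_abs le x x.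
Proof.
move=> x0; split=> [_ [->|->]|u]; [exact: vl_refl | | by move=> h; apply: h; left].
by apply: (vl_trans _ x0); rewrite -vl_opp2 opprK oppr0.
Qed.

Lemma is_sup_meetr A s f :
  is_sup le A s -> is_sup le [set vmeet a f | a in A] (vmeet s f).
Proof.
move=> [As Als]; split=> [_ [a Aa <-]|v vub].
  by apply: vmeet_glb; [exact: vl_trans (vmeet_l a f) (As a Aa) | exact: vmeet_r].
(* a /\ f + a \/ f = a + f turns the bound on meets into one on joins. *)
rewrite vmeetE -(vl_add2r (vjoin s f)) subrK -(vl_add2r (- f)) addrK.
apply: Als => a Aa; rewrite -(vl_add2r f) subrK.
rewrite -[a + f](subrK (vjoin a f)) -vmeetE; apply: vl_add.
  by apply: vub; exists a.
by apply: vjoin_lub; [exact: vl_trans (As a Aa) (vjoin_l s f) | exact: vjoin_r].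
Qed.

Lemma vl_sub_meet_abs p y : le (p - vmeet (vabs y) p) (vabs (p - y)).
Proof.
rewrite vl_sub_swap; apply: vmeet_glb.
  by apply: (vl_trans _ (vabs_ge y)); rewrite vl_sub_swap; exact: vabs_ge.
by rewrite -[X in le _ X]subr0 vl_add2l vl_opp2; exact: vabs_ge0.
Qed.

Lemma is_sup_bigcup_meet (A : set V) p (f : nat -> V) (D : nat -> set V) :
  is_sup le A p -> is_sup le (range f) p -> (forall n, D n `<=` A) ->
  (forall n, is_sup le [set vmeet d (f n) | d in D n] (f n)) ->
  is_sup le (\bigcup_n D n) p.
Proof.
move=> [Ap _] [_ fl] DA Dsup; split=> [a [n _ /DA]|u uD]; first exact: Ap.
apply: fl => _ [n _ <-]; apply: (Dsup n).2 => _ [d Dd <-].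
by apply: vl_trans (vmeet_l d (f n)) (uD d _); exists n.
Qed.

Lemma countable_sup_nonempty A s : countable_sup_property le ->
  A !=set0 -> is_sup le A s ->
  exists B, [/\ B `<=` A, countable B, B !=set0 & is_sup le B s].
Proof.
move=> csp [a Aa] As; have [B [BA cB [Bs Bl]]] := csp A s (ex_intro _ a Aa) As.
exists (a |` B); split=> [x [->|/BA]//|||]; [exact: countableU1 | by exists a; left|].
split=> [x [->|/Bs//]|u uaB]; first exact: As.1 _ Aa.
by apply: Bl => x Bx; apply: uaB; right.
Qed.

Lemma countable_sup_of_positive :
  (forall A s, A !=set0 -> (forall a, A a -> le 0 a) -> is_sup le A s ->
     exists B, [/\ B `<=` A, countable B & is_sup le B s]) ->
  countable_sup_property le.
Proof.
move=> cspP A s [a0 Aa0] [As Als].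
pose g a := vjoin a a0 - a0.
have gA : is_sup le (g @` A) (s - a0).
  split=> [_ [a Aa <-]|u ub].
    by rewrite vl_add2r; apply: vjoin_lub; apply: As.
  rewrite -(vl_add2r a0) subrK; apply: Als => a Aa.
  apply: (vl_trans (vjoin_l a a0)); rewrite -(vl_add2r (- a0)) addrK.
  by apply: ub; exists a.
have gA0 : g @` A !=set0 by exists (g a0), a0.
have gA_ge0 x : (g @` A) x -> le 0 x.
  by move=> [a _ <-]; rewrite vl_subr_ge0; exact: vjoin_r.
have [B' [B'gA cB' B's]] := cspP _ _ gA0 gA_ge0 gA.
have [D [DA cD gD]] := countable_image_sub B'gA cB'.
exists (a0 |` D); split; [by move=> x [->|/DA] | exact: countableU1 |].
split=> [x [->|/DA]|u ub]; [exact: As | exact: As |].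
rewrite -(vl_add2r (- a0)); apply: B's.2 => x; rewrite -gD => -[d Dd <-].
by rewrite vl_add2r; apply: vjoin_lub; apply: ub; [right | left].
Qed.

End VectorLattice.

Section LinearMap.
Variables (R : realType) (E F : topologicalLmodType R) (j : E -> F).
Hypothesis jlin : forall (a : R) x y, j (a *: x + y) = a *: j x + j y.

Lemma linD x y : j (x + y) = j x + j y.
Proof. by have := jlin 1 x y; rewrite !scale1r. Qed.

Lemma lin0 : j 0 = 0.
Proof. by apply/(addrI (j 0)); rewrite addr0 -linD addr0. Qed.

Lemma linB x y : j (x - y) = j x - j y.
Proof. by have := jlin (-1) y x; rewrite !scaleN1r addrC => ->; rewrite addrC. Qed.

End LinearMap.

Lemma nbhs_split_op (T : topologicalType) (op : T -> T -> T) (z : T) (W : set T) :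
  {for (z, z), continuous (fun q : T * T => op q.1 q.2)} -> op z z = z ->
  nbhs z W -> exists2 W1 : set T, nbhs z W1 & forall a b, W1 a -> W1 b -> W (op a b).
Proof.
move=> opc opz zW; have := opc W; rewrite /= opz => /(_ zW).
case=> [[A B]] /= [zA zB] AB; exists (A `&` B); first exact: filterI.
by move=> a b [Aa _] [_ Bb]; exact: (AB (a, b)).
Qed.

Lemma hausdorff_nbhs_eq (T : topologicalType) (x y : T) :
  hausdorff_space T -> (forall W, nbhs y W -> W x) -> x = y.
Proof.
move=> hT yx; apply/esym/hT => A B yA xB; exists x; split; first exact: yx.
exact: nbhs_singleton.
Qed.

Lemma metrizable_nbhs0_basis (R : realType) (E : topologicalLmodType R) :
  metrizable E ->
  exists U : nat -> set E, (forall n, nbhs 0 (U n)) /\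
    (forall W, nbhs 0 W -> exists n, U n `<=` W).
Proof.
move=> [d [_ _ _ _ dN]]; exists (fun n => [set y | d 0 y < n.+1%:R^-1]).
split=> [n|W /(dN 0 W).1[e e0 eW]].
  by apply/dN; exists n.+1%:R^-1 => //; rewrite invr_gt0 ltr0Sn.
have [n ne] := ltr_add_invr e0; rewrite add0r in ne.
by exists n => y /= dy; apply: eW; exact: lt_trans dy ne.
Qed.

Section DenseEmbedding.
Variables (R : realType) (E F : topologicalLmodType R) (j : E -> F).
Hypotheses (jlin : forall (a : R) x y, j (a *: x + y) = a *: j x + j y)
  (jcont : continuous j)
  (jemb : forall U : set E, nbhs (0 : E) U ->
      exists2 V : set F, nbhs (0 : F) V & (forall x, V (j x) -> U x))
  (jdense : closure (range j) = setT).

Lemma dense_range_approx (N : set F) p : nbhs 0 N -> exists x, N (p - j x).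
Proof.
move=> N0; have : closure (range j) p by rewrite jdense.
have pN : nbhs p [set z | N (p - z)].
  have : (fun z => p - z) @ p --> p - p.
    apply: (@continuous_comp _ _ _ (fun z => (p, z)) (fun q : F * F => q.1 - q.2)).
      by apply: cvg_pair; [exact: cvg_cst | exact: cvg_id].
    exact: sub_continuous.
  by rewrite subrr; apply.
by move=> /(_ _ pN)[_ [[x _ <-] Npx]]; exists x.
Qed.

Lemma metrizable_dense_range_seq p : metrizable E ->
  exists e : nat -> E, forall W, nbhs 0 W -> exists n, W (p - j (e n)).
Proof.
move=> /metrizable_nbhs0_basis[U [U0 Ub]].
have /choice[V hV] n : exists V, nbhs 0 V /\ forall x, V (j x) -> U n x.
  by have [V V0 VU] := jemb (U0 n); exists V.
have /choice[V' hV'] n :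
    exists V', nbhs 0 V' /\ forall a b, V' a -> V' b -> V n (a - b).
  have [V' V'0 V'V] := nbhs_split_op (op := fun a b => a - b)
    (@sub_continuous _ (0, 0)) (subr0 0) (hV n).1.
  by exists V'.
have /choice[e he] n : exists x, V' n (p - j x).
  exact: dense_range_approx p (hV' n).1.
exists e => W W0.
have [W1 W10 W1W] :=
  nbhs_split_op (op := +%R) (@add_continuous _ (0, 0)) (addr0 0) W0.
have /Ub[n UW1] : nbhs 0 (j @^-1` W1).
  by apply: jcont; rewrite (lin0 jlin).
have [x [V'x W1x]] := dense_range_approx p (filterI (hV' n).1 W10).
have /UW1 W1j : U n (x - e n).
  apply: (hV n).2; rewrite (linB jlin).
  by have := (hV' n).2 _ _ (he n) V'x; rewrite opprB addrC addrA subrK.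
by exists n; have := W1W _ _ W1j W1x; rewrite (linB jlin) addrC addrA subrK.
Qed.

End DenseEmbedding.

Section SolidHausdorff.
Variables (R : realType) (F : topologicalLmodType R) (leF : F -> F -> Prop).
Hypotheses (HF : archimedean_vector_lattice leF) (HFs : locally_solid leF)
  (Hh : hausdorff_space F).

Lemma is_sup_meet_abs_approx p (y : nat -> F) :
  (forall W, nbhs 0 W -> exists n, W (p - y n)) ->
  is_sup leF (range (fun n => vmeet leF (vabs leF (y n)) p)) p.
Proof.
move=> yp; split=> [_ [n _ <-]|u ub]; first exact: vmeet_r.
pose w := vjoin leF (p - u) 0.
(* 0 <= w <= |p - y n| for every n, so w lies in every solid zero neighbourhood. *)
have w0 : w = 0.
  apply: hausdorff_nbhs_eq => // W /HFs[W0 [W00 W0s W0W]]; apply: W0W.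
  have [n W0py] := yp W0 W00.
  apply: (W0s _ _ _ _ W0py (vabsP HF _) (is_abs_ge0 HF (vjoin_r HF _ _))).
  apply: (vjoin_lub HF); last exact: vabs_ge0.
  apply: (vl_trans HF _ (vl_sub_meet_abs HF p (y n))).
  by rewrite (vl_add2l HF) (vl_opp2 HF); apply: ub; exists n.
by rewrite -(vl_add2r HF (- u)) subrr -w0; exact: vjoin_l.
Qed.

End SolidHausdorff.


Section IdealInCompletion.
Variables (R : realType) (E F : topologicalLmodType R)
  (leE : E -> E -> Prop) (leF : F -> F -> Prop) (j : E -> F).
Hypotheses (HE : archimedean_vector_lattice leE)
  (HF : archimedean_vector_lattice leF) (HFs : locally_solid leF)
  (Hh : hausdorff_space F)
  (jlin : forall (a : R) x y, j (a *: x + y) = a *: j x + j y)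
  (jinj : injective j)
  (jsup : forall x y s, is_sup leE [set x; y] s -> is_sup leF [set j x; j y] (j s))
  (HI : ideal_in leF j)
  (japprox : forall p, exists e : nat -> E,
     forall W, nbhs 0 W -> exists n, W (p - j (e n))).

Lemma j_le x y : leF (j x) (j y) <-> leE x y.
Proof.
split=> [jxy|xy]; last by apply: is_sup2_leP; apply: jsup; exact: is_sup2_le.
have [s xys] := vl_sup2 HE x y.
have /jinj sy : j s = j y by apply: (is_sup_unique HF (jsup xys)); exact: is_sup2_le.
by move: xys; rewrite sy; exact: is_sup2_leP.
Qed.

Lemma range_solid c y : range j y -> leF 0 c -> leF c (vabs leF y) -> range j c.
Proof. by move=> jy c0 cy; apply: HI jy (vabsP HF y) (is_abs_ge0 HF c0) cy. Qed.

Lemma is_sup_image B t : B !=set0 -> is_sup leE B t -> is_sup leF (j @` B) (j t).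
Proof.
move=> [b0 Bb0] [Bt Btl]; split=> [_ [b Bb <-]|u ub]; first by rewrite j_le; exact: Bt.
pose m := vmeet leF (j t) u.
have jtm_ge0 : leF 0 (j t - m) by rewrite (vl_subr_ge0 HF); exact: vmeet_l.
have jtm_le : leF (j t - m) (vabs leF (j (t - b0))).
  apply: (vl_trans HF _ (vabs_ge HF _)).
  rewrite (linB jlin) (vl_add2l HF) (vl_opp2 HF).
  by apply: (vmeet_glb HF); [rewrite j_le; exact: Bt | apply: ub; exists b0].
have [z _ jz] := range_solid (imageT j (t - b0)) jtm_ge0 jtm_le.
have mE : m = j (t - z) by rewrite (linB jlin) jz opprB addrC subrK.
have tz : leE t (t - z).
  apply: Btl => b Bb; rewrite -j_le -mE.
  by apply: (vmeet_glb HF); [rewrite j_le; exact: Bt | apply: ub; exists b].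
by apply: (vl_trans HF _ (vmeet_r HF (j t) u)); rewrite -/m mE j_le.
Qed.

Lemma is_sup_image_reflect B t : is_sup leF (j @` B) (j t) -> is_sup leE B t.
Proof.
move=> [jBt jBl]; split=> [b Bb|u ub]; rewrite -j_le.
  by apply: jBt; exists b.
by apply: jBl => _ [b Bb <-]; rewrite j_le; exact: ub.
Qed.

Lemma countable_sup_in_range X t : countable_sup_property leE ->
  X `<=` range j -> X !=set0 -> is_sup leF X (j t) ->
  exists Y, [/\ Y `<=` X, countable Y & is_sup leF Y (j t)].
Proof.
move=> cspE Xj X0 Xt.
have XE : j @` (j @^-1` X) = X.
  apply/seteqP; split=> [|x Xx]; first exact: image_preimage_subset.
  by have [y _ yx] := Xj x Xx; exists y => //; rewrite -yx in Xx.
rewrite -XE in X0 Xt; have [_ [y Xjy _]] := X0.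
have [B [BX cB B0 Bt]] :=
  countable_sup_nonempty cspE (ex_intro _ y Xjy) (is_sup_image_reflect Xt).
exists (j @` B); split; [by move=> _ [b /BX Xjb <-] | |].
  exact: sub_countable (card_image_le _ _) cB.
exact: is_sup_image B0 Bt.
Qed.

Lemma countable_sup_from_completion :
  countable_sup_property leF -> countable_sup_property leE.
Proof.
move=> cspF A t [a Aa] At.
have jA0 : j @` A !=set0 by exists (j a), a.
have [B' [B'A cB' B't]] := cspF _ _ jA0 (is_sup_image (ex_intro _ a Aa) At).
have [D [DA cD jD]] := countable_image_sub B'A cB'.
by exists D; split=> //; apply: is_sup_image_reflect; rewrite jD.
Qed.

Lemma countable_sup_to_completion :
  countable_sup_property leE -> countable_sup_property leF.
Proof.
move=> cspE; apply: (countable_sup_of_positive HF) => A p [a0 Aa0] A_ge0 Ap.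
have [e ep] := japprox p.
pose f n := vmeet leF (vabs leF (j (e n))) p.
have fp : is_sup leF (range f) p := is_sup_meet_abs_approx HF HFs Hh ep.
have f_ge0 n : leF 0 (f n).
  apply: (vmeet_glb HF); first exact: vabs_ge0.
  exact: (vl_trans HF (A_ge0 _ Aa0) (Ap.1 _ Aa0)).
have f_range n : range j (f n).
  by apply: (range_solid (imageT j (e n)) (f_ge0 n)); exact: vmeet_l.
have /choice[D hD] n : exists D, [/\ D `<=` A, countable D &
    is_sup leF [set vmeet leF d (f n) | d in D] (f n)].
  have [t _ jt] := f_range n.
  have Xt : is_sup leF [set vmeet leF a (f n) | a in A] (j t).
    rewrite jt -{2}(vmeet_idr HF (vmeet_r HF _ _ : leF (f n) p)).
    exact: is_sup_meetr.
  have Xj : [set vmeet leF a (f n) | a in A] `<=` range j.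
    move=> _ [a Aa <-]; apply: (range_solid (f_range n)).
      by apply: (vmeet_glb HF); [exact: A_ge0 | exact: f_ge0].
    exact: (vl_trans HF (vmeet_r HF _ _) (vabs_ge HF _)).
  have X0 : [set vmeet leF a (f n) | a in A] !=set0 by exists (vmeet leF a0 (f n)), a0.
  have [Y [YX cY Yt]] := countable_sup_in_range cspE Xj X0 Xt.
  have [D [DA cD DY]] := countable_image_sub YX cY.
  by exists D; split=> //; rewrite DY -jt.
exists (\bigcup_n D n); split.
- by move=> a [n _]; case: (hD n) => + _ _; apply.
- by apply: bigcup_countable => // n _; case: (hD n).
- by apply: (is_sup_bigcup_meet HF Ap fp) => n; case: (hD n).
Qed.

End IdealInCompletion.

Unset Implicit Arguments.

Theorem theorem5p9 (R : realType) (E F : topologicalLmodType R)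
  (leE : E -> E -> Prop) (leF : F -> F -> Prop) (j : E -> F) :
  locally_solid_vector_lattice leE ->
  metrizable E ->
  is_lsvl_completion leE leF j ->
  ideal_in leF j ->
  (countable_sup_property leE <-> countable_sup_property leF).
Proof.
move=> [HE _] mE [[HF HFs] [Hh [_ [jlin [jinj [jsup [jcont [jemb jdense]]]]]]]] HI.
have japprox p := metrizable_dense_range_seq jlin jcont jemb jdense p mE.
split; first exact: countable_sup_to_completion HE HF HFs Hh jlin jinj jsup HI japprox.
exact: countable_sup_from_completion HE HF jlin jinj jsup HI.
Qed.
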